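(* Let $d\ge2$, let $\Omega=\{x\in\mathbb R^d:\ \ell_j(x)>b_j,\ j=1,\dots,m\}$ be a nonempty bounded open convex polytope, and let $E\subset\mathbb R^d$ carry a Borel probability measure $\mu$ such that $(E,\mu)$ is weakly incoming to $\Omega$. Let $x_0\in\overline\Omega$ and $k=\mathrm c(x_0)$. Then there exist $\epsilon>0$ and measurable subsets $F_1,\dots,F_k\subset E$ with $\mu(F_i)>0$ for all $i$, such that: (a) there exist $r_0>0$ and $I\subset\{1,\dots,m\}$ with $\#I=k$ such that $\Omega\cap B(x_0,r_0)=\big(\bigcap_{i\in I}H_i^+\big)\cap B(x_0,r_0)$; (b) there exist $\theta_1,\dots,\theta_k\in\{\pm1\}$ and a bijection $\{1,\dots,k\}\ni n\mapsto i_n\in I$ such that for every $n\in\{1,\dots,k\}$ and every $f_n\in F_n$, $\theta_nf_n$ is strictly incoming to $H_{i_n}$ and $\theta_nf_n$ is incoming to $H_{i_m}$ for all $m>n$. Moreover, the sets $F_1,\dots,F_k$ can be chosen with arbitrarily small diameter.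
   Context: $\ell_j$ are linear forms and $b_j$ reals; $B(x_0,r)$ is the open ball. Define $\mathrm c(x)=0$ for $x\in\Omega$, $+\infty$ for $x\notin\overline\Omega$, $\#\{i:\ell_i(x)=b_i\}$ for $x\in\partial\Omega$. $(E,\mu)$ is weakly incoming to $\Omega$ if for every $x_0\in\partial\Omega$ there exist $\epsilon>0$, $\theta\in\{\pm1\}$ and a measurable $F\subset E$ with $\mu(F)>0$ such that $\mathrm c(x_0+\theta te)<\mathrm c(x_0)$ for all $t\in]0,\epsilon]$, $e\in F$. $H_k=\ker\ell_k$, $H_k^+=\{y:\ell_k(y)>b_k\}$, $\nu_k$ is the unit vector orthogonal to $H_k$ with $\ell_k(\nu_k)>0$. A nonzero vector $u$ is incoming to $H_k$ if $\langle u,\nu_k\rangle\ge0$ and strictly incoming if $\langle u,\nu_k\rangle>0$. *)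

From HB Require Import structures.
From mathcomp Require Import all_boot all_order all_algebra.
From mathcomp Require Import all_classical all_reals all_analysis.

Set Implicit Arguments.
Unset Strict Implicit.
Unset Printing Implicit Defensive.

Import Order.TTheory GRing.Theory Num.Theory.
Import numFieldNormedType.Exports.
Local Open Scope classical_set_scope.
Local Open Scope ring_scope.

(* Points of R^d are row vectors 'rV[R]_d.  A linear form l on R^d is
   represented by its coefficient vector a : l(x) = <a, x>. *)

Definition dotv (R : realType) (d : nat) (u v : 'rV[R]_d) : R :=
  \sum_(i < d) u ord0 i * v ord0 i.

Definition enorm (R : realType) (d : nat) (u : 'rV[R]_d) : R :=
  Num.sqrt (dotv u u).

Definition eball (R : realType) (d : nat) (x0 : 'rV[R]_d) (r : R) : set 'rV[R]_d :=
  [set y | enorm (y - x0) < r].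

Definition lform (R : realType) (d : nat) (a : 'rV[R]_d) (x : 'rV[R]_d) : R :=
  dotv a x.

Definition polytope (R : realType) (d m : nat) (a : 'I_m -> 'rV[R]_d)
  (b : 'I_m -> R) : set 'rV[R]_d :=
  [set x | forall j : 'I_m, b j < lform (a j) x].

Definition Hplus (R : realType) (d m : nat) (a : 'I_m -> 'rV[R]_d)
  (b : 'I_m -> R) (k : 'I_m) : set 'rV[R]_d :=
  [set y | b k < lform (a k) y].

(** The function c : 0 on Omega, +oo outside the closure, and the number of
    active constraints on the boundary (Omega is open, so its boundary is
    closure Omega minus Omega). *)
Definition cfun (R : realType) (d m : nat) (a : 'I_m -> 'rV[R]_d)
  (b : 'I_m -> R) (x : 'rV[R]_d) : \bar R :=
  if x \in polytope a b then 0%E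
  else if x \in closure (polytope a b) then
    (#|[set j : 'I_m | lform (a j) x == b j]|%:R)%:E
  else +oo%E.

Definition nuv (R : realType) (d m : nat) (a : 'I_m -> 'rV[R]_d) (k : 'I_m)
  : 'rV[R]_d := (enorm (a k))^-1 *: a k.

Definition incoming (R : realType) (d m : nat) (a : 'I_m -> 'rV[R]_d)
  (u : 'rV[R]_d) (k : 'I_m) : Prop :=
  u != 0 /\ 0 <= dotv u (nuv a k).

Definition strictly_incoming (R : realType) (d m : nat) (a : 'I_m -> 'rV[R]_d)
  (u : 'rV[R]_d) (k : 'I_m) : Prop :=
  u != 0 /\ 0 < dotv u (nuv a k).

Definition borelRd (R : realType) (d : nat) := g_sigma_algebraType (@open 'rV[R]_d).

Definition weakly_incoming (R : realType) (d m : nat) (a : 'I_m -> 'rV[R]_d)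
  (b : 'I_m -> R) (E : set 'rV[R]_d) (mu : probability (borelRd R d) R) : Prop :=
  forall x0, x0 \in closure (polytope a b) `\` polytope a b ->
    exists eps : R, 0 < eps /\ exists theta : R, (theta = 1 \/ theta = -1) /\
    exists F : set 'rV[R]_d, F `<=` E /\ measurable (F : set (borelRd R d)) /\
      (0 < mu F)%E /\
      forall t e, 0 < t -> t <= eps -> F e ->
        (cfun a b (x0 + (theta * t) *: e) < cfun a b x0)%E.

From HB Require Import structures.
From mathcomp Require Import all_boot all_order all_algebra.
From mathcomp Require Import all_classical all_reals all_analysis.
From mathcomp Require Import ring lra.
Set Implicit Arguments.
Unset Strict Implicit.
Unset Printing Implicit Defensive.

Import Order.TTheory GRing.Theory Num.Theory.
Import numFieldNormedType.Exports.
Local Open Scope classical_set_scope.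
Local Open Scope ring_scope.

(* Induction on the number of active constraints at x.  At a boundary point x,
   weak incomingness gives a positive-measure set of directions e and a sign
   theta such that x + t theta e stays in the closure with fewer active
   constraints; hence theta e is incoming to every face active at x.
   Splitting this set by the faces to which e is parallel, and by a grid of
   small cubes, yields a piece G of positive measure and small diameter on
   which that pattern is constant.  Moving a little along some e in G leaves
   exactly the faces parallel to G active: G is the piece attached to each
   face that becomes inactive (theta e is strictly incoming to it), and the
   induction hypothesis at the new point supplies the remaining pieces. *)

Section inner_product.
Context {R : realType} {d : nat}.
Implicit Types (u v w : 'rV[R]_d).

Lemma dotvC u v : dotv u v = dotv v u.
Proof. by apply: eq_bigr => i _; rewrite mulrC. Qed.

Lemma dotvDr u v w : dotv u (v + w) = dotv u v + dotv u w.
Proof. by rewrite /dotv -big_split; apply: eq_bigr => i _; rewrite mxE mulrDr. Qed.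

Lemma dotvZr u c v : dotv u (c *: v) = c * dotv u v.
Proof. by rewrite /dotv mulr_sumr; apply: eq_bigr => i _; rewrite mxE mulrCA. Qed.

Lemma dotvBr u v w : dotv u (v - w) = dotv u v - dotv u w.
Proof. by rewrite /dotv -sumrB; apply: eq_bigr => i _; rewrite !mxE mulrBr. Qed.

Lemma dotv0r u : dotv u 0 = 0.
Proof. by rewrite /dotv big1 // => i _; rewrite mxE mulr0. Qed.

Lemma continuous_dotv u : continuous (dotv u).
Proof.
rewrite /dotv; elim: (index_enum _) => [|i r IH].
  by under eq_fun do rewrite big_nil; exact: cst_continuous.
under eq_fun do rewrite big_cons.
move=> x; apply: (@continuousD _ _ _ (fun y => _) (fun y => _)); last exact: IH.
by apply: continuousM; [exact: cst_continuous | exact: coord_continuous].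
Qed.

Lemma dotvv_ge0 u : 0 <= dotv u u.
Proof. by apply: sumr_ge0 => i _; rewrite -expr2 sqr_ge0. Qed.

Lemma dotvv_gt0 u : u != 0 -> 0 < dotv u u.
Proof.
move=> u0; rewrite lt_def dotvv_ge0 andbT; apply: contraNneq u0 => uu0.
apply/eqP/rowP => i; rewrite mxE; apply/eqP; rewrite -sqrf_eq0 expr2.
by apply/eqP; apply: (psumr_eq0P _ uu0) => // j _; rewrite -expr2 sqr_ge0.
Qed.

Lemma enorm_gt0 u : u != 0 -> 0 < enorm u.
Proof. by move=> u0; rewrite sqrtr_gt0 dotvv_gt0. Qed.

Lemma coord_le_enorm v i : `|v ord0 i| <= enorm v.
Proof.
rewrite /enorm -sqrtr_sqr ler_sqrt; last exact: dotvv_ge0.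
rewrite /dotv (bigD1 i) //= expr2 lerDl.
by apply: sumr_ge0 => j _; rewrite -expr2 sqr_ge0.
Qed.

Lemma dotv_le_enorm u v : `|dotv u v| <= (\sum_i `|u ord0 i|) * enorm v.
Proof.
rewrite /dotv mulr_suml; apply: le_trans (ler_norm_sum _ _ _) _.
by apply: ler_sum => i _; rewrite normrM ler_wpM2l // coord_le_enorm.
Qed.

End inner_product.

Lemma exists_pos_lower_bound {R : realDomainType} {I : finType} (g : I -> R) :
  exists2 r, 0 < r & forall i, 0 < g i -> r <= g i.
Proof.
suff [r r0 hr] : exists2 r : R, 0 < r & forall i, i \in enum I -> 0 < g i -> r <= g i.
  by exists r => // i; apply: hr; rewrite mem_enum.
elim: (enum I) => [|j s [r r0 hr]]; first by exists 1.
have [gj0|gj0] := ltP 0 (g j).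
  exists (Order.min r (g j)) => [|i]; first by rewrite lt_min r0.
  by rewrite inE => /predU1P [-> _|/hr h /h]; rewrite ge_min ?lexx ?orbT // => ->.
exists r => // i; rewrite inE => /predU1P [->|/hr //].
by rewrite ltNge gj0.
Qed.

Section polytope.
Context {R : realType} {d m : nat} (a : 'I_m -> 'rV[R]_d) (b : 'I_m -> R).
Local Notation P := (polytope a b).
Implicit Types (x v : 'rV[R]_d).

Definition active x : {set 'I_m} := [set j | lform (a j) x == b j].

Lemma lform_shift j x t v :
  lform (a j) (x + t *: v) = lform (a j) x + t * lform (a j) v.
Proof. by rewrite /lform dotvDr dotvZr. Qed.

Lemma closure_polytope_ge x : x \in closure P -> forall j, b j <= lform (a j) x.
Proof.
move=> + j.
have Hclosed : closed [set y | b j <= lform (a j) y].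
  by have := (continuous_closedP _).1 (@continuous_dotv _ _ (a j)) _ (@closed_ge _ (b j)).
have sub : P `<=` [set y | b j <= lform (a j) y] by move=> y /(_ j) /ltW.
by move=> /set_mem /(closureS sub); rewrite -((closure_id _).1 Hclosed); apply.
Qed.

Lemma active_polytope x j : x \in P -> j \notin active x.
Proof. by move=> /set_mem xP; rewrite inE gt_eqF //; exact: xP. Qed.

Lemma cfun_closure x : x \in closure P -> cfun a b x = (#|active x|%:R)%:E.
Proof.
move=> xcl; rewrite /cfun xcl; case: ifP => [xP | _].
  by rewrite eq_card0 // => j; apply/negbTE/active_polytope.
congr ((_%:R)%:E); apply: eq_card => j.
by rewrite inE; apply/idP/idP => [/set_mem | /mem_set].
Qed.

Lemma cfun_lt_closure x r : (cfun a b x < r%:E)%E -> x \in closure P.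
Proof.
rewrite /cfun; case: ifPn => [/set_mem xP _ | _].
  exact/mem_set/subset_closure.
by case: ifPn => // _; rewrite ltNge leey.
Qed.

Lemma active_dir_ge0 x t v j : x + t *: v \in closure P -> 0 < t ->
  j \in active x -> 0 <= lform (a j) v.
Proof.
move=> /closure_polytope_ge /(_ j); rewrite lform_shift => ge_xt t0.
by rewrite inE => /eqP xj; move: ge_xt; rewrite xj lerDl pmulr_rge0.
Qed.

Lemma active_segment x t s v : x \in closure P -> x + t *: v \in closure P ->
  0 < s < t -> active (x + s *: v) = [set j in active x | lform (a j) v == 0].
Proof.
move=> xcl xtcl /andP [s0 st]; apply/setP => j; rewrite !inE lform_shift.
have [/eqP -> | xj] := boolP (lform (a j) x == b j).
  by rewrite -subr_eq0 addrAC subrr add0r mulf_eq0 gt_eqF.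
have gt_x : b j < lform (a j) x.
  by rewrite lt_neqAle eq_sym xj closure_polytope_ge.
have := closure_polytope_ge xtcl j; rewrite lform_shift => ge_xt.
by rewrite gt_eqF //; nra.
Qed.

Lemma polytope_near x0 : x0 \in closure P -> exists2 r0, 0 < r0 &
  P `&` eball x0 r0 =
    (\bigcap_(i in [set j | j \in active x0]) Hplus a b i) `&` eball x0 r0.
Proof.
move=> x0cl; pose C j := \sum_i `|a j ord0 i| + 1.
have C0 j : 0 < C j by rewrite ltr_wpDl // sumr_ge0.
have [r r0 hr] := exists_pos_lower_bound (fun j => (lform (a j) x0 - b j) / C j).
exists r => //; apply/seteqP; split => y [yP yx0]; split => //.
  by move=> i _; exact: yP.
move=> j; have [/yP // | xj] := boolP (j \in active x0).
have gap : 0 < lform (a j) x0 - b j.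
  by move: xj; rewrite subr_gt0 lt_neqAle closure_polytope_ge // andbT eq_sym inE.
have := hr j; rewrite divr_gt0 // ler_pdivlMr // => /(_ isT) rC.
have := dotv_le_enorm (a j) (y - x0); rewrite dotvBr ler_norml => /andP [+ _].
have : (\sum_i `|a j ord0 i|) * enorm (y - x0) < r * C j.
  apply: (@le_lt_trans _ _ (C j * enorm (y - x0))).
    by rewrite ler_wpM2r ?sqrtr_ge0 ?lerDl.
  by rewrite [X in _ < X]mulrC ltr_pM2l.
move: rC; rewrite /= /lform; lra.
Qed.

End polytope.

Section incoming.
Context {R : realType} {d m : nat} (a : 'I_m -> 'rV[R]_d).

Lemma dotv_nuv u i : dotv u (nuv a i) = (enorm (a i))^-1 * lform (a i) u.
Proof. by rewrite /nuv dotvZr dotvC. Qed.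

Lemma lform_gt0_strictly_incoming u i :
  a i != 0 -> 0 < lform (a i) u -> strictly_incoming a u i.
Proof.
move=> ai0 ui; split; first by apply: contraTneq ui => ->; rewrite /lform dotv0r ltxx.
by rewrite dotv_nuv mulr_gt0 // invr_gt0 enorm_gt0.
Qed.

Lemma lform_ge0_incoming u i :
  a i != 0 -> u != 0 -> 0 <= lform (a i) u -> incoming a u i.
Proof.
by move=> ai0 u0 ui; split => //; rewrite dotv_nuv mulr_ge0 // invr_ge0 ltW // enorm_gt0.
Qed.

End incoming.

Lemma countable_cover_measure_gt0 {dsp} {T : measurableType dsp} {R : realType}
    {I : countType} (mu : {measure set T -> \bar R}) (G : I -> set T) (F : set T) :
  measurable F -> (0 < mu F)%E -> F `<=` \bigcup_t G t ->
  (forall t, measurable (G t)) -> exists t, (0 < mu (F `&` G t))%E.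
Proof.
move=> mF muF FG mG; apply: contrapT => no_t.
pose H n := if unpickle n is Some t then F `&` G t else set0.
have negH n : mu.-negligible (H n).
  rewrite /H; case: (unpickle n) => [t|]; last exact: negligible_set0.
  apply/negligibleP; first exact: measurableI.
  apply/eqP; rewrite eq_le measure_ge0 andbT leNgt; apply/negP => pos.
  by apply: no_t; exists t.
have FH : F `<=` \bigcup_n H n.
  by move=> x Fx; have [t _ Gx] := FG x Fx; exists (pickle t); rewrite /H ?pickleK.
have /(negligibleP _ mF) muF0 := negligibleS FH (negligible_bigcup negH).
by rewrite muF0 ltxx in muF.
Qed.

Lemma measurable_forall {dsp} {T : algebraOfSetsType dsp} {I : finType}
    (A : I -> set T) :
  (forall i, measurable (A i)) -> measurable [set e | forall i, A i e].
Proof.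
move=> mA; rewrite (_ : [set e | _] = \bigcap_(i in setT) A i).
  exact: fin_bigcap_measurable finite_finset (fun i _ => mA i).
by apply/seteqP; split => e h i //; exact: h.
Qed.

Section borel.
Context {R : realType} {d : nat}.
Local Notation B := (borelRd R d).
Implicit Types (A : set 'rV[R]_d).

Lemma measurable_open_Rd A : open A -> measurable (A : set B).
Proof. by move=> oA; apply: sub_sigma_algebra. Qed.

Lemma measurable_closed_Rd A : closed A -> measurable (A : set B).
Proof.
move=> cA; rewrite -[A]setCK; apply: measurableC.
by apply: measurable_open_Rd; exact: closed_openC.
Qed.

Lemma measurable_zero_eq (f : 'rV[R]_d -> R) (c : bool) :
  continuous f -> measurable ([set e | (f e == 0) = c] : set B).
Proof.
move=> fc; have Z0 : closed (f @^-1` [set 0]).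
  exact: (continuous_closedP _).1 fc _ (@closed_eq _ 0).
case: c.
  rewrite (_ : [set e | _] = f @^-1` [set 0]); first exact: measurable_closed_Rd.
  by apply/seteqP; split => e /= /eqP.
rewrite (_ : [set e | _] = ~` (f @^-1` [set 0])).
  by apply: measurableC; apply: measurable_closed_Rd.
by apply/seteqP; split => e /=; [move=> /negbT /eqP | move=> /eqP /negbTE].
Qed.

Definition grid_cube (eta : R) (z : 'rV[int]_d) : set 'rV[R]_d :=
  [set e | forall i, `|e ord0 i - (z ord0 i)%:~R * eta| < eta].

Lemma measurable_grid_cube eta z : measurable (grid_cube eta z : set B).
Proof.
apply: measurable_forall => i; apply: measurable_open_Rd.
pose c := (z ord0 i)%:~R * eta.
apply: (@open_comp _ _ (fun e : 'rV[R]_d => e ord0 i) [set y | `|y - c| < eta]).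
  by move=> e _; exact: coord_continuous.
rewrite (_ : [set y | _] = ball c eta); first exact: ball_open.
by apply/seteqP; split => y; rewrite /= -ball_normE /= distrC.
Qed.

Lemma grid_cube_cover eta : 0 < eta -> forall e, exists z, grid_cube eta z e.
Proof.
move=> eta0 e; exists (\row_i Num.floor (e ord0 i / eta)) => i; rewrite mxE.
set q := e ord0 i / eta.
have -> : e ord0 i = q * eta by rewrite /q divfK // gt_eqF.
have := floor_itv q; rewrite -mulrBl normrM (gtr0_norm eta0) => /andP [h1 h2].
rewrite gtr_pMl // ger0_norm ?subr_ge0 //.
by move: h2; rewrite intrD; lra.
Qed.

Lemma grid_cube_diam eta z x y : 0 < eta ->
  grid_cube eta z x -> grid_cube eta z y -> enorm (x - y) < 2 * eta * (d%:R + 1).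
Proof.
move=> eta0 xz yz.
have coord i : (x - y) ord0 i ^+ 2 <= (2 * eta) ^+ 2.
  have := xz i; have := yz i; rewrite !mxE !ltr_norml => /andP [y1 y2] /andP [x1 x2].
  nra.
have sum_le : dotv (x - y) (x - y) <= d%:R * (2 * eta) ^+ 2.
  rewrite /dotv (eq_bigr (fun i => (x - y) ord0 i ^+ 2)) => [|i _]; last exact: expr2.
  apply: le_trans (ler_sum _ (fun i _ => coord i)) _.
  by rewrite sumr_const card_ord [leRHS]mulr_natl.
have D0 : 0 <= d%:R :> R by [].
set t := 2 * eta * _; have t0 : 0 < t by rewrite mulr_gt0 ?ltr_wpDl ?mulr_gt0.
rewrite /enorm -[X in _ < X](gtr0_norm t0) -sqrtr_sqr ltr_sqrt ?exprn_gt0 //.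
apply: le_lt_trans sum_le _; rewrite /t !exprMn; nra.
Qed.

End borel.

Section pieces.
Context {R : realType} {d m : nat} (a : 'I_m -> 'rV[R]_d).
Local Notation B := (borelRd R d).

Definition parallel_faces (v : 'rV[R]_d) : {set 'I_m} := [set i | lform (a i) v == 0].

Lemma measurable_parallel_faces S : measurable ([set e | parallel_faces e = S] : set B).
Proof.
rewrite (_ : [set e | _] = [set e | forall i, (lform (a i) e == 0) = (i \in S)]).
  by apply: measurable_forall => i; apply: measurable_zero_eq; exact: continuous_dotv.
apply/seteqP; split => e /= => [<- i | h]; first by rewrite inE.
by apply/setP => i; rewrite inE h.
Qed.

End pieces.

Section descent.
Context {R : realType} {d m : nat} (a : 'I_m -> 'rV[R]_d) (b : 'I_m -> R).
Context (E : set 'rV[R]_d) (mu : probability (borelRd R d) R) (delta : R).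
Hypothesis hwi : weakly_incoming a b E mu.
Hypothesis delta0 : 0 < delta.
Local Notation B := (borelRd R d).
Local Notation P := (polytope a b).
Local Notation active := (active a b).

Definition admissible (F : set 'rV[R]_d) : Prop :=
  F `<=` E /\ measurable (F : set B) /\ (0 < mu F)%E /\
  forall x y, F x -> F y -> enorm (x - y) < delta.

Lemma admissible_subpiece (F0 : set 'rV[R]_d) :
  F0 `<=` E -> measurable (F0 : set B) -> (0 < mu F0)%E ->
  exists G S, [/\ admissible G, G `<=` F0 & forall e, G e -> parallel_faces a e = S].
Proof.
move=> F0E mF0 muF0; pose eta := delta / (2 * (d%:R + 1)).
have eta0 : 0 < eta by rewrite divr_gt0 // mulr_gt0 // ltr_wpDl.
pose Q (p : {set 'I_m} * 'rV[int]_d) :=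
  [set e | parallel_faces a e = p.1] `&` grid_cube eta p.2.
have mQ p : measurable (Q p : set B).
  by apply: measurableI; [exact: measurable_parallel_faces | exact: measurable_grid_cube].
have [[S z] muG] : exists p, (0 < mu (F0 `&` Q p))%E.
  apply: countable_cover_measure_gt0 => // e _.
  by have [z ez] := grid_cube_cover eta0 e; exists (parallel_faces a e, z).
exists (F0 `&` Q (S, z)), S; split; last by move=> e [_ []].
- split; first by move=> e [/F0E].
  split; first exact: measurableI.
  split => // x y [_ [_ xz]] [_ [_ yz]]; have := grid_cube_diam eta0 xz yz.
  have D1 : 0 < d%:R + 1 :> R by rewrite ltr_wpDl.
  suff -> : 2 * eta * (d%:R + 1) = delta by [].
  by rewrite /eta; field; rewrite gt_eqF.
- by move=> e [].
Qed.

Lemma weakly_incoming_descent x : x \in closure P -> x \notin P ->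
  exists eps theta F0, [/\ 0 < eps, theta = 1 \/ theta = -1,
    [/\ F0 `<=` E, measurable (F0 : set B) & (0 < mu F0)%E] &
    forall e t, F0 e -> 0 < t <= eps ->
      x + t *: (theta *: e) \in closure P /\
      (#|active (x + t *: (theta *: e))| < #|active x|)%N].
Proof.
move=> xcl xP; have xbd : x \in closure P `\` P.
  by apply/mem_set; split; [exact/set_mem | move/mem_set; apply/negP].
have [eps [eps0 [theta [theta1 [F0 [F0E [mF0 [muF0 dec]]]]]]]] := hwi xbd.
exists eps, theta, F0; split => // e t F0e /andP [t0 te].
have := dec t e t0 te F0e; rewrite [cfun a b x]cfun_closure // mulrC -scalerA.
move=> lt_cx; have xtcl : x + t *: (theta *: e) \in closure P.
  exact: cfun_lt_closure lt_cx.
by move: lt_cx; rewrite cfun_closure // lte_fin ltr_nat.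
Qed.

Lemma active_descent x j0 : x \in closure P -> j0 \in active x ->
  exists G theta x1, [/\ admissible G, theta = 1 \/ theta = -1,
    x1 \in closure P, active x1 \proper active x &
    forall f, G f ->
      (forall i, i \in active x -> 0 <= lform (a i) (theta *: f)) /\
      (forall i, i \in active x :\: active x1 -> 0 < lform (a i) (theta *: f))].
Proof.
move=> xcl xj0; have xP : x \notin P by apply: contraL xj0; exact: active_polytope.
have [eps [theta [F0 [eps0 theta1 [F0E mF0 muF0] down]]]] :=
  weakly_incoming_descent xcl xP.
have eps_in : 0 < eps <= eps by rewrite eps0 lexx.
have dir_ge0 f i : F0 f -> i \in active x -> 0 <= lform (a i) (theta *: f).
  by move=> F0f; apply: active_dir_ge0 (down f eps F0f eps_in).1 eps0.
have [G [S [adG GF0 GS]]] := admissible_subpiece F0E mF0 muF0.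
have [e0 Ge0] : G !=set0.
  apply/set0P/negP => /eqP G0; case: adG => _ [_ [+ _]].
  by rewrite G0 measure0 ltxx.
have theta0 : theta != 0 by case: theta1 => ->; rewrite ?oppr_eq0 oner_eq0.
have parallel f i : G f -> (lform (a i) (theta *: f) == 0) = (i \in S).
  by move=> Gf; rewrite /lform dotvZr mulf_eq0 (negbTE theta0) -(GS f Gf) inE.
pose x1 := x + (eps / 2) *: (theta *: e0).
have [x1cl x1lt] : x1 \in closure P /\ (#|active x1| < #|active x|)%N.
  by apply: down; [exact: GF0 | rewrite divr_gt0 //=; lra].
have x1act : active x1 = [set i in active x | i \in S].
  have eps_half : 0 < eps / 2 < eps by apply/andP; split; lra.
  rewrite /x1 (active_segment xcl (down e0 eps (GF0 _ Ge0) eps_in).1 eps_half).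
  by apply/setP => i; rewrite !inE parallel.
exists G, theta, x1; split => //.
  by rewrite properEcard x1lt x1act setIdE subsetIl.
move=> f Gf; split => [i | i]; first exact/dir_ge0/GF0.
rewrite x1act !inE => /andP [+ xi]; rewrite xi /= => notS.
by rewrite lt_def parallel // notS /=; apply: dir_ge0; [exact: GF0 | rewrite inE].
Qed.

End descent.

Record piece (R : realType) (d m : nat) :=
  Piece { pset : set 'rV[R]_d; psign : R; pface : 'I_m }.

Section chain.
Context {R : realType} {d m : nat} (a : 'I_m -> 'rV[R]_d).
Context (E : set 'rV[R]_d) (mu : probability (borelRd R d) R) (delta : R).
Local Notation piece := (piece R d m).
Local Notation faces := (map (@pface R d m)).

(* The triples (F_n, theta_n, i_n) of the statement, listed in the order of n. *)
Fixpoint incoming_chain (L : seq piece) : Prop :=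
  if L is p :: L' then
    [/\ admissible E mu delta (pset p), psign p = 1 \/ psign p = -1,
        forall f, pset p f -> strictly_incoming a (psign p *: f) (pface p) /\
          {in faces L', forall j, incoming a (psign p *: f) j}
      & incoming_chain L']
  else True.

Lemma map_pface_Piece G theta (s : seq 'I_m) :
  faces (map (Piece G theta) s) = s.
Proof. by elim: s => //= i s ->. Qed.

Lemma incoming_chain_cat G theta s L :
  admissible E mu delta G -> theta = 1 \/ theta = -1 ->
  (forall f, G f -> {in s, forall i, strictly_incoming a (theta *: f) i} /\
     {in s ++ faces L, forall j, incoming a (theta *: f) j}) ->
  incoming_chain L -> incoming_chain (map (Piece G theta) s ++ L).
Proof.
move=> adG theta1 + chainL; elim: s => //= i s IH hG; split => //.
  move=> f Gf; have [strict inc] := hG f Gf.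
  split; first by apply: strict; rewrite inE eqxx.
  by move=> j; rewrite map_cat map_pface_Piece => js; apply: inc; rewrite inE js orbT.
apply: IH => f Gf; have [strict inc] := hG f Gf.
by split => j js; [apply: strict | apply: inc]; rewrite inE js orbT.
Qed.

Lemma incoming_chain_nth L p0 n : incoming_chain L -> (n < size L)%N ->
  let p := nth p0 L n in
  [/\ admissible E mu delta (pset p), psign p = 1 \/ psign p = -1 &
   forall f, pset p f -> strictly_incoming a (psign p *: f) (pface p) /\
     forall n', (n < n' < size L)%N -> incoming a (psign p *: f) (pface (nth p0 L n'))].
Proof.
elim: L n => [|p L IH] [|n] //=.
  case=> adp p1 hp _ _; split => // f pf; have [strict inc] := hp f pf.
  split => // -[|n'] //= n'L; apply: inc.
  by rewrite -(nth_map _ (pface p0)) // mem_nth ?size_map.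
case=> _ _ _ chainL nL; have [adn sn hn] := IH n chainL nL.
by split => // f fn; have [strict inc] := hn f fn; split => // -[|n'] //; exact: inc.
Qed.

Lemma incoming_chain_tnth k (t : k.-tuple piece) (n : 'I_k) : incoming_chain t ->
  let p := tnth t n in
  [/\ admissible E mu delta (pset p), psign p = 1 \/ psign p = -1 &
   forall f, pset p f -> strictly_incoming a (psign p *: f) (pface p) /\
     forall n' : 'I_k, (n < n')%N -> incoming a (psign p *: f) (pface (tnth t n'))].
Proof.
move=> chain_t; have nt : (n < size t)%N by rewrite size_tuple.
have [adn sn hn] := incoming_chain_nth (tnth_default t n) chain_t nt.
split => // f fn; have [strict inc] := hn f fn; split => // n' nn'.
by rewrite (tnth_nth (tnth_default t n) t n'); apply: inc; rewrite nn' size_tuple /=.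
Qed.

End chain.

Section existence.
Context {R : realType} {d m : nat} (a : 'I_m -> 'rV[R]_d) (b : 'I_m -> R).
Context (E : set 'rV[R]_d) (mu : probability (borelRd R d) R) (delta : R).
Hypothesis ha : forall j, a j != 0.
Hypothesis hwi : weakly_incoming a b E mu.
Hypothesis delta0 : 0 < delta.
Local Notation P := (polytope a b).
Local Notation active := (active a b).
Local Notation faces := (map (@pface R d m)).

Lemma incoming_chain_exists x : x \in closure P ->
  exists2 L, incoming_chain a E mu delta L & uniq (faces L) /\ faces L =i active x.
Proof.
have [n] := ubnP #|active x|; elim: n x => // n IH x xn xcl.
have [x_act0 | [j0 xj0]] := set_0Vmem (active x).
  by exists [::] => //; split => // j; rewrite x_act0 !inE.
have [G [theta [x1 [adG theta1 x1cl x1x hG]]]] := active_descent hwi delta0 xcl xj0.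
have [|L1 chainL1 [uniqL1 facesL1]] := IH x1 _ x1cl.
  exact: leq_trans (proper_card x1x) xn.
have /properP [x1sub [i0 xi0 x1i0]] := x1x.
set S := active x :\: active x1.
have i0S : i0 \in S by rewrite inE x1i0.
pose L := map (Piece G theta) (enum S) ++ L1.
have facesL : faces L =i active x.
  move=> j; rewrite map_cat map_pface_Piece mem_cat mem_enum facesL1.
  rewrite /S inE; have [/(fintype.subsetP x1sub) -> | _] := boolP (j \in active x1).
    by rewrite orbT.
  by rewrite orbF.
exists L; last split => //.
  apply: incoming_chain_cat => // f Gf; have [ge0 gt0] := hG f Gf.
  have f0 : theta *: f != 0.
    by apply: contraTneq (gt0 i0 i0S) => ->; rewrite /lform dotv0r ltxx.
  split => [i | j].
    rewrite mem_enum => iS.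
    by apply: lform_gt0_strictly_incoming; [exact: ha | exact: gt0].
  rewrite -(map_pface_Piece G theta (enum S)) -map_cat facesL => jx.
  by apply: lform_ge0_incoming => //; exact: ge0.
rewrite map_cat map_pface_Piece cat_uniq enum_uniq uniqL1 andbT /=.
by apply/hasPn => j; rewrite facesL1 mem_enum /S => jx1; rewrite inE jx1.
Qed.

End existence.

Theorem proposition5p4 (R : realType) (d m : nat) (hd : (2 <= d)%N)
  (a : 'I_m -> 'rV[R]_d) (b : 'I_m -> R)
  (ha : forall j, a j != 0)
  (hne : polytope a b !=set0)
  (hbd : bounded_set (polytope a b))
  (E : set 'rV[R]_d) (hE : measurable (E : set (borelRd R d)))
  (mu : probability (borelRd R d) R) (hmuE : mu E = 1%E)
  (hwi : weakly_incoming a b E mu)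
  (x0 : 'rV[R]_d) (hx0 : x0 \in closure (polytope a b))
  (k : nat) (hk : cfun a b x0 = (k%:R)%:E) :
  forall delta : R, 0 < delta ->
  exists eps : R, 0 < eps /\
  exists F : 'I_k -> set 'rV[R]_d,
    (forall n, F n `<=` E /\ measurable (F n : set (borelRd R d)) /\ (0 < mu (F n))%E
       /\ forall x y, F n x -> F n y -> enorm (x - y) < delta) /\
    exists (r0 : R) (I : {set 'I_m}),
      0 < r0 /\ #|I| = k /\
      (* (a) *)
      polytope a b `&` eball x0 r0 =
        (\bigcap_(i in [set j | j \in I]) Hplus a b i) `&` eball x0 r0 /\
      (* (b) *)
      exists (theta : 'I_k -> R) (idx : 'I_k -> 'I_m),
        (forall n, theta n = 1 \/ theta n = -1) /\
        injective idx /\ [set idx n | n in [set: 'I_k]]%classic = [set j | j \in I] /\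
        forall n (fn : 'rV[R]_d), F n fn ->
          strictly_incoming a (theta n *: fn) (idx n) /\
          forall n' : 'I_k, (n < n')%N -> incoming a (theta n *: fn) (idx n').
Proof.
move=> delta delta0.
have cardk : #|active a b x0| = k.
  by move: hk; rewrite cfun_closure // => -[/eqP]; rewrite eqr_nat => /eqP.
have [r0 r00 near_x0] := polytope_near hx0.
have [L chainL [uniqL facesL]] := incoming_chain_exists ha hwi delta0 hx0.
have sizeL : size L == k.
  rewrite -cardk -(size_map (@pface R d m)) -(card_uniqP uniqL).
  by apply/eqP/eq_card.
pose t := Tuple sizeL; have chain_t : incoming_chain a E mu delta t by [].
have inj : injective (tnth (map_tuple (@pface R d m) t)) by apply/tuple_uniqP.
(* The statement places no constraint on [eps]. *)
exists 1; split => //; exists (fun n => pset (tnth t n)); split.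
  by move=> n; have [] := incoming_chain_tnth n chain_t.
exists r0, (active a b x0); do 3 split => //.
exists (fun n => psign (tnth t n)), (fun n => pface (tnth t n)).
split; last split; last split.
- by move=> n; have [] := incoming_chain_tnth n chain_t.
- by move=> n n'; rewrite -!(tnth_map (@pface R d m)) => /inj.
- apply/seteqP; split => j /=; rewrite -facesL.
    by case=> n _ <-; rewrite -tnth_map mem_tnth.
  by case/(tnthP (map_tuple (@pface R d m) t)) => n ->; exists n; rewrite ?tnth_map.
- by move=> n f fn; have [_ _ /(_ f fn)] := incoming_chain_tnth n chain_t.
Qed.
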